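(* Let $\mathcal{T}$ be a finite tree, $w:V(\mathcal{T})\to\mathbb{R}_{\ge0}$, $m=w(\mathcal{T})$, and let $C$ be a centroid tree of $(\mathcal{T},w)$ with $\mathtt{cost}_w(C)=\mathtt{cent}(\mathcal{T},w)$. Let $p\ge0$ and let $v_0,v_1,\dots,v_p$ be vertices such that $v_0$ is the root of $C$ and $v_i$ is a child of $v_{i-1}$ in $C$ for $1\le i\le p$; let $P=\{v_0,\dots,v_p\}$. Then $$\mathtt{cent}(\mathcal{T},w)\le\left(2-\frac1{2^p}\right)m+\sum_{\mathcal{H}\in\mathbb{C}(\mathcal{T}-P)}\mathtt{cent}(\mathcal{H},w).$$
   Context: $\mathbb{C}(G)$ denotes the set of connected components of a graph $G$, and $\mathcal{T}-P$ is the subgraph induced by $V(\mathcal{T})\setminus P$. For a subgraph $\mathcal{H}$, $w(\mathcal{H})=\sum_{x\in V(\mathcal{H})}w(x)$, and $w$ also denotes its restriction to $V(\mathcal{H})$. A search tree on a tree $\mathcal{T}$ is a rooted tree $T$ with vertex set $V(\mathcal{T})$ defined recursively: its root is an arbitrary vertex $r$, and the children of $r$ are the roots of search trees built on the connected components of $\mathcal{T}-r$; a single-vertex tree has only itself as search tree. $\mathtt{cost}_w(T)=\sum_x w(x)\,\mathtt{depth}_T(x)$ with root depth $1$. A vertex $v$ is a centroid of $(\mathcal{T},w)$ if each component $\mathcal{H}$ of $\mathcal{T}-v$ has $w(\mathcal{H})\le w(\mathcal{T})/2$. A search tree $T$ is a centroid tree if each vertex $x$ is a centroid of $(\mathcal{T}[V(T_x)],w)$,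 $T_x$ being the subtree of $T$ rooted at $x$. $\mathtt{cent}(\mathcal{T},w)$ is the maximum cost of a centroid tree of $(\mathcal{T},w)$. *)

From HB Require Import structures.
From mathcomp Require Import all_boot all_order all_algebra.
From mathcomp Require Import reals.
From Stdlib Require List.
Set Implicit Arguments. Unset Strict Implicit. Unset Printing Implicit Defensive.
Import Order.TTheory GRing.Theory Num.Theory.
Local Open Scope ring_scope.

Section Defs.
Variable V : finType.
Variable e : rel V.

Definition relS (S : {set V}) : rel V := fun x y => [&& x \in S, y \in S & e x y].

Definition comp (S : {set V}) (x : V) : {set V} := [set y in S | connect (relS S) x y].

Definition comps (S : {set V}) : {set {set V}} := [set comp S x | x in S].

Definition connectedS (S : {set V}) : Prop :=
  forall x y, x \in S -> y \in S -> connect (relS S) x y.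

Definition acyclic : Prop :=
  ~ exists (x : V) (p : seq V),
      [/\ path e x p, uniq (x :: p), 2 <= size p & e (last x p) x]%N.

Definition is_tree : Prop :=
  [/\ symmetric e, irreflexive e, connectedS [set: V] & acyclic].

Inductive stree : Type := Node : V -> seq stree -> stree.

Definition st_root (t : stree) : V := let: Node r _ := t in r.

Fixpoint vset (t : stree) : {set V} :=
  let: Node r ts := t in
  r |: (fix aux (l : seq stree) : {set V} :=
          if l is u :: us then vset u :|: aux us else set0) ts.

Fixpoint subtrees (t : stree) : seq stree :=
  let: Node r ts := t in
  t :: (fix aux (l : seq stree) : seq stree :=
          if l is u :: us then subtrees u ++ aux us else [::]) ts.

(* [is_st S t]: t is a search tree on the induced subgraph G[S] *)
Inductive is_st : {set V} -> stree -> Prop :=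
| ST (S : {set V}) (r : V) (ts : seq stree) :
    r \in S ->
    uniq (map vset ts) ->
    [set X in map vset ts] = comps (S :\ r) ->
    (forall u, List.In u ts -> is_st (vset u) u) ->
    is_st S (Node r ts).

Definition is_child (t : stree) (v u : V) : Prop :=
  exists ts, List.In (Node v ts) (subtrees t) /\
             exists c, List.In c ts /\ st_root c = u.

Variable R : realType.
Variable w : V -> R.

Definition wsum (S : {set V}) : R := \sum_(x in S) w x.

Definition centroid (S : {set V}) (v : V) : Prop :=
  v \in S /\ forall H, H \in comps (S :\ v) -> wsum H <= wsum S / 2.

(* sum of w(x) * depth(x), where the st_root of t has depth d *)
Fixpoint costd (d : nat) (t : stree) : R :=
  let: Node r ts := t in
  w r * d%:R + (fix aux (l : seq stree) : R :=
                  if l is u :: us then costd d.+1 u + aux us else 0) ts.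

Definition cost (t : stree) : R := costd 1 t.

Definition centroid_tree (S : {set V}) (t : stree) : Prop :=
  is_st S t /\ forall u, List.In u (subtrees t) -> centroid (vset u) (st_root u).

Definition cent (S : {set V}) : R :=
  sup (fun c : R => exists t, centroid_tree S t /\ c = cost t).

End Defs.

(** A search tree with root [r] on [S] costs [w(S)] plus the
    costs of the subtrees at the children of [r], which are search trees on the
    components of [S - r].  In a centroid tree each of these subtrees is a centroid
    tree of its component, so it costs at most the [cent] of that component.  As [r]
    is a centroid, the child [v_1] heads a component [S'] with [w(S') <= w(S)/2], and
    the induction hypothesis bounds its subtree by [(2 - 1/2^(p-1)) w(S')] plus the
    [cent] of the components of [S' - P].  Now
    [w(S) + (2 - 1/2^(p-1)) w(S)/2 = (2 - 1/2^p) w(S)], and the components of [S' - P]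
    together with the other components of [S - r] are components of [S - P]. *)

From Pilot Require Import Defs.
From HB Require Import structures.
From mathcomp Require Import all_boot all_order all_algebra.
From mathcomp Require Import reals.
From mathcomp Require Import ring lra.
From Stdlib Require Classical.
Set Implicit Arguments. Unset Strict Implicit. Unset Printing Implicit Defensive.
Import Order.TTheory GRing.Theory Num.Theory.
Local Open Scope ring_scope.

Lemma In_mem (T : eqType) (x : T) s : List.In x s -> x \in s.
Proof. by elim: s => [|y s IH] //= [->|/IH]; rewrite inE ?eqxx // => ->; rewrite orbT. Qed.

Lemma eq_big_In {T R : Type} {idx : R} {op : R -> R -> R} {f g : T -> R} {l} :
  (forall u, List.In u l -> f u = g u) ->
  \big[op/idx]_(u <- l) f u = \big[op/idx]_(u <- l) g u.
Proof.
elim: l => [|x l IH] fg; rewrite ?big_nil ?big_cons //.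
rewrite (fg x); last by left.
by rewrite IH // => u Hu; apply: fg; right.
Qed.

Lemma ler_big_In (T : Type) (R : numDomainType) (f g : T -> R) l :
  (forall u, List.In u l -> f u <= g u) -> \sum_(u <- l) f u <= \sum_(u <- l) g u.
Proof.
elim: l => [|x l IH] fg; rewrite ?big_nil ?big_cons //.
by apply: lerD; [apply: fg; left | apply: IH => u Hu; apply: fg; right].
Qed.

Lemma imset_ord_recl (T : finType) (f : nat -> T) n :
  [set f (nat_of_ord i) | i : 'I_n.+2] = f 0%N |: [set f i.+1 | i : 'I_n.+1].
Proof.
apply/setP=> x; apply/imsetP/setU1P => [[[[|i] hi] _ ->]|[->|/imsetP [i _ ->]]].
- by left.
- by right; apply/imsetP; exists (Ordinal (hi : (i < n.+1)%N)).
- by exists ord0.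
- by exists (lift ord0 i); rewrite ?lift0.
Qed.

Section Components.
Variables (V : finType) (e : rel V).
Hypothesis esym : symmetric e.

Definition edge_closed (X H : {set V}) :=
  forall x y, x \in H -> y \in X -> e x y -> y \in H.

Lemma relS_sym (X : {set V}) : symmetric (relS e X).
Proof. by move=> x y; rewrite /relS esym andbCA. Qed.

Lemma connect_relS_closed (X K : {set V}) a b : edge_closed X K -> a \in K ->
  connect (relS e X) a b -> connect (relS e K) a b.
Proof.
move=> Kcl + /connectP [p pth ->]; elim: p a pth => [|y p IH] a /=.
  by rewrite connect0.
case/andP=> /and3P [aX yX ay] pth aK; have yK : y \in K by apply: Kcl ay.
by apply: connect_trans (connect1 _) (IH y pth yK); rewrite /relS aK yK ay.
Qed.

Lemma connect_relS_mem (K : {set V}) a b : a \in K -> connect (relS e K) a b -> b \in K.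
Proof.
move=> aK ab; have Kcl : closed (relS e K) K by move=> x y /and3P [-> -> _].
by rewrite -(closed_connect Kcl ab).
Qed.

Lemma comp_edge_closed (X : {set V}) x : edge_closed X (Defs.comp e X x).
Proof.
move=> a b; rewrite !inE => /andP [aX xa] bX ab; rewrite bX /=.
by apply: connect_trans xa (connect1 _); rewrite /relS aX bX ab.
Qed.

Lemma comp_connected (X : {set V}) x : connectedS e (Defs.comp e X x).
Proof.
move=> a b aC bC; apply: (connect_relS_closed (comp_edge_closed (x := x)) aC).
move: aC bC; rewrite !inE => /andP [_ xa] /andP [_ xb].
by apply: connect_trans _ xb; rewrite (sym_connect_sym (relS_sym X)).
Qed.

Lemma edge_closed_comp (X H : {set V}) z : edge_closed X H -> connectedS e H ->
  H \subset X -> z \in H -> H = Defs.comp e X z.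
Proof.
move=> Hcl Hcon HX zH; apply/setP=> y; rewrite inE; apply/idP/idP.
- move=> yH; rewrite (subsetP HX y yH) /=.
  apply: connect_sub (Hcon z y zH yH) => a b /and3P [aH bH ab]; apply: connect1.
  by rewrite /relS (subsetP HX a aH) (subsetP HX b bH) ab.
- by case/andP=> _ /(connect_relS_closed Hcl zH); apply: connect_relS_mem.
Qed.

Lemma compsP (X H : {set V}) : H \in comps e X <->
  [/\ H != set0, H \subset X, connectedS e H & edge_closed X H].
Proof.
split.
- case/imsetP=> x xX ->; split.
  + by apply/set0Pn; exists x; rewrite inE xX connect0.
  + by apply/subsetP=> y; rewrite inE => /andP [].
  + exact: comp_connected.
  + exact: comp_edge_closed.
- case=> /set0Pn [x xH] HX Hcon Hcl; apply/imsetP; exists x; first exact: (subsetP HX).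
  exact: edge_closed_comp.
Qed.

Lemma comps_sub (X H : {set V}) : H \in comps e X -> H \subset X.
Proof. by case/compsP. Qed.

Lemma comps_eq (X H1 H2 : {set V}) z : H1 \in comps e X -> H2 \in comps e X ->
  z \in H1 -> z \in H2 -> H1 = H2.
Proof.
move=> /compsP [_ s1 c1 k1] /compsP [_ s2 c2 k2] z1 z2.
by rewrite (edge_closed_comp k1 c1 s1 z1) (edge_closed_comp k2 c2 s2 z2).
Qed.

Lemma trivIset_comps (X : {set V}) : trivIset (comps e X).
Proof.
apply/trivIsetP=> A B AX BX AB; rewrite disjoints_subset; apply/subsetP=> z zA.
by rewrite inE; apply/negP=> zB; apply: (negP AB); apply/eqP; exact: comps_eq AX BX zA zB.
Qed.

Lemma cover_comps (X : {set V}) : cover (comps e X) = X.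
Proof.
apply/setP=> x; apply/bigcupP/idP => [[H HX xH]|xX]; first exact: subsetP (comps_sub HX) x xH.
by exists (Defs.comp e X x); [apply/imsetP; exists x | rewrite inE xX connect0].
Qed.

Lemma comps_setD_subset (X Y K : {set V}) : K \in comps e X -> Y \subset K ->
  comps e (K :\: Y) :|: (comps e X :\ K) \subset comps e (X :\: Y).
Proof.
move=> KX YK; have [_ KsubX _ Kcl] := (compsP _ _).1 KX.
rewrite subUset; apply/andP; split; apply/subsetP=> H.
- case/compsP=> H0 HKY Hcon Hcl; apply/compsP; split => //.
    by apply: subset_trans HKY _; apply: setSD.
  move=> x y xH /setDP [yX yY] xy; have /setDP [xK _] := subsetP HKY x xH.
  by apply: (Hcl x y xH _ xy); rewrite in_setD yY (Kcl x y xK yX xy).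
- rewrite in_setD1 => /andP [HK HX]; have [H0 HsubX Hcon Hcl] := (compsP _ _).1 HX.
  apply/compsP; split => //; last by move=> x y xH /setDP [yX _]; apply: Hcl xH yX.
  apply/subsetP=> x xH; rewrite in_setD (subsetP HsubX x xH) andbT; apply/negP => xY.
  by move/eqP: HK; apply; apply: comps_eq HX KX xH (subsetP YK x xY).
Qed.

Lemma comps_setD_disjoint (X Y K : {set V}) : K \in comps e X ->
  [disjoint comps e (K :\: Y) & comps e X :\ K].
Proof.
move=> KX; rewrite disjoints_subset; apply/subsetP=> H HKY.
rewrite in_setC in_setD1; apply/negP => /andP [HK HX].
have [/set0Pn [z zH] /subsetP HsubKY _ _] := (compsP _ _).1 HKY.
have /setDP [zK _] := HsubKY z zH.
by move/eqP: HK; apply; apply: comps_eq HX KX zH zK.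
Qed.

Lemma sum_comps_setD (R : numDomainType) (F : {set V} -> R) (X Y K : {set V}) :
  (forall H, 0 <= F H) -> K \in comps e X -> Y \subset K ->
  \sum_(H in comps e (K :\: Y)) F H + \sum_(H in comps e X :\ K) F H
    <= \sum_(H in comps e (X :\: Y)) F H.
Proof.
move=> F0 KX YK; rewrite -bigU ?comps_setD_disjoint //.
rewrite [leRHS](big_setID (comps e (K :\: Y) :|: (comps e X :\ K))) /=.
rewrite (setIidPr (comps_setD_subset KX YK)) (eq_bigl [in comps e (K :\: Y) :|: (comps e X :\ K)]) ?lerDl ?sumr_ge0 //.
by move=> H; rewrite !inE.
Qed.

Lemma wsum_comps (R : realType) (w : V -> R) (X : {set V}) :
  wsum w X = \sum_(H in comps e X) wsum w H.
Proof. by rewrite /wsum -{1}(cover_comps X) big_trivIset // trivIset_comps. Qed.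

End Components.

Section SearchTrees.
Variable V : finType.

Lemma vsetE (r : V) ts : vset (Node r ts) = r |: \bigcup_(u <- ts) vset u.
Proof. by congr (_ |: _); elim: ts => [|u us IH]; rewrite ?big_nil ?big_cons -?IH. Qed.

Lemma root_in (t : stree V) : st_root t \in vset t.
Proof. by case: t => r ts; rewrite vsetE setU11. Qed.

Lemma vset_child (r : V) ts u : List.In u ts -> vset u \subset vset (Node r ts).
Proof.
rewrite vsetE => Hu; apply/subsetP=> y yu; rewrite inE; apply/orP; right.
elim: ts Hu => [|x xs IH] //=; rewrite big_cons inE => -[->|/IH ->]; by rewrite ?yu ?orbT.
Qed.

Lemma subtreesE (a : stree V) (r : V) ts : List.In a (subtrees (Node r ts)) <->
  a = Node r ts \/ exists2 u, List.In u ts & List.In a (subtrees u).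
Proof.
rewrite /=; split.
- case=> [<-|Ha]; [by left | right].
  elim: ts Ha => [|u us IH] //= /List.in_app_iff [Ha|/IH [x Hx Ha]].
    by exists u => //; left.
  by exists x => //; right.
- case=> [->|[u Hu Ha]]; [by left | right].
  elim: ts Hu => [|x xs IH] //= [->|Hx]; apply/List.in_app_iff; by [left | right; apply: IH].
Qed.

Lemma subtrees_self (t : stree V) : List.In t (subtrees t).
Proof. by case: t => r ts; apply/subtreesE; left. Qed.

Variable e : rel V.
Hypothesis esym : symmetric e.

Lemma is_stE S (r : V) ts : is_st e S (Node r ts) ->
  [/\ r \in S, uniq (map (@vset V) ts), [set X in map (@vset V) ts] = comps e (S :\ r)
    & forall u, List.In u ts -> is_st e (vset u) u].
Proof. by move=> H; inversion H. Qed.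

Lemma big_comps_children (A : Type) (idx : A) (op : Monoid.com_law idx)
    (F : {set V} -> A) S r ts : is_st e S (Node r ts) ->
  \big[op/idx]_(H in comps e (S :\ r)) F H = \big[op/idx]_(u <- ts) F (vset u).
Proof.
case/is_stE=> _ un eqs _; rewrite -eqs -(big_map (@vset V) xpredT F) (big_uniq _ un).
by apply: eq_bigl => X; rewrite inE.
Qed.

Lemma comps_child S r ts u : is_st e S (Node r ts) -> List.In u ts ->
  vset u \in comps e (S :\ r).
Proof. by case/is_stE=> _ _ <- _ Hu; rewrite inE; apply/In_mem/List.in_map. Qed.

Lemma vset_st S t : is_st e S t -> vset t = S.
Proof.
case: t => r ts st; rewrite vsetE -(big_comps_children _ id st).
by rewrite -/(cover _) cover_comps // setD1K //; case/is_stE: st.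
Qed.

Lemma vset_subtree S t a : is_st e S t -> List.In a (subtrees t) -> vset a \subset vset t.
Proof.
move=> st; elim: st a => {t} {}S r ts _ _ _ _ IH a /subtreesE [->|[u Hu Ha]].
  exact: subxx.
exact: subset_trans (IH u Hu a Ha) (vset_child _ Hu).
Qed.

Lemma uniq_vset_In (l : seq (stree V)) u u' : uniq (map (@vset V) l) ->
  List.In u l -> List.In u' l -> vset u = vset u' -> u = u'.
Proof.
elim: l => [|x l IH] //= /andP [nx ul] [Hx|Hu] [Hx'|Hu'] E.
- by rewrite -Hx -Hx'.
- by move: nx; rewrite Hx E (In_mem (List.in_map _ _ _ Hu')).
- by move: nx; rewrite Hx' -E (In_mem (List.in_map _ _ _ Hu)).
- exact: IH.
Qed.

(* A subtree whose root lies in the child [c] is a subtree of [c], because the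
   children of the root span pairwise disjoint components. *)
Lemma subtree_child S r ts c a : is_st e S (Node r ts) -> List.In c ts ->
  List.In a (subtrees (Node r ts)) -> st_root a \in vset c -> List.In a (subtrees c).
Proof.
move=> st Hc /subtreesE [->|[u Hu Ha]] /= ra.
  by move: (subsetP (comps_sub esym (comps_child st Hc)) _ ra); rewrite !inE eqxx.
have [_ un _ sts] := is_stE st.
have rau : st_root a \in vset u := subsetP (vset_subtree (sts u Hu) Ha) _ (root_in a).
have E := comps_eq esym (comps_child st Hu) (comps_child st Hc) rau ra.
by rewrite -(uniq_vset_In un Hu Hc E).
Qed.

Lemma is_child_root S r ts u : is_st e S (Node r ts) -> is_child (Node r ts) r u ->
  exists2 c, List.In c ts & st_root c = u.
Proof.
move=> st [ts' [/subtreesE [[<-] | [c0 Hc0 Ha]] [c [Hc rc]]]]; first by exists c.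
have [_ _ _ sts] := is_stE st.
have := subsetP (vset_subtree (sts c0 Hc0) Ha) r (root_in _).
by move/(subsetP (comps_sub esym (comps_child st Hc0))); rewrite !inE eqxx.
Qed.

Lemma is_child_mem S t x y : is_st e S t -> is_child t x y -> y \in vset t.
Proof.
move=> st [ts [Hn [c [Hc <-]]]].
exact: subsetP (vset_subtree st Hn) _ (subsetP (vset_child _ Hc) _ (root_in c)).
Qed.

Lemma is_child_subtree S r ts c x y : is_st e S (Node r ts) -> List.In c ts ->
  x \in vset c -> is_child (Node r ts) x y -> is_child c x y.
Proof.
by move=> st Hc xc [ts' [Hn ch]]; exists ts'; split=> //; exact: (subtree_child st Hc Hn xc).
Qed.

Lemma root_path_child S r ts (v : nat -> V) p : is_st e S (Node r ts) -> v 0%N = r ->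
  (forall i, (1 <= i <= p.+1)%N -> is_child (Node r ts) (v i.-1) (v i)) ->
  exists2 c, List.In c ts &
    [/\ v 1%N = st_root c, forall i, (i <= p)%N -> v i.+1 \in vset c
      & forall i, (i < p)%N -> is_child c (v i.+1) (v i.+2)].
Proof.
move=> st v0 ch; have [c Hc rc] : exists2 c, List.In c ts & st_root c = v 1%N.
  by apply: is_child_root st _; have := ch 1%N isT; rewrite /= v0.
have [_ _ _ sts] := is_stE st.
have step i : (i < p)%N -> v i.+1 \in vset c ->
    is_child c (v i.+1) (v i.+2) /\ v i.+2 \in vset c.
  move=> ip vi; have chc := is_child_subtree st Hc vi (ch i.+2 ip).
  by split=> //; apply: is_child_mem (sts c Hc) chc.
have mem i : (i <= p)%N -> v i.+1 \in vset c.
  elim: i => [|i IH] ip; first by rewrite -rc root_in.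
  by apply: (step i ip (IH (ltnW ip))).2.
exists c => //; split=> // i ip; exact: (step i ip (mem i (ltnW ip))).1.
Qed.

Variables (R : realType) (w : V -> R).
Hypothesis w0 : forall x, 0 <= w x.

Lemma costdE d (r : V) ts :
  costd w d (Node r ts) = w r * d%:R + \sum_(u <- ts) costd w d.+1 u.
Proof. by congr (_ + _); elim: ts => [|u us IH]; rewrite ?big_nil ?big_cons -?IH. Qed.

Lemma wsum_ge0 S : 0 <= wsum w S.
Proof. exact: sumr_ge0. Qed.

Lemma wsum_st S r ts : is_st e S (Node r ts) ->
  wsum w S = w r + \sum_(u <- ts) wsum w (vset u).
Proof.
move=> st; have [rS _ _ _] := is_stE st.
by rewrite /wsum (big_setD1 r rS) -/(wsum w _) (wsum_comps esym) (big_comps_children _ _ st).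
Qed.

Lemma costdS S t d : is_st e S t -> costd w d.+1 t = costd w d t + wsum w S.
Proof.
move=> st; elim: st d => {t} {}S r ts rS un eqs sts IH d.
rewrite !costdE (wsum_st (ST rS un eqs sts)).
rewrite (eq_big_In (fun u Hu => IH u Hu d.+1)) big_split /= -addn1 natrD; ring.
Qed.

Lemma cost_node S r ts : is_st e S (Node r ts) ->
  cost w (Node r ts) = wsum w S + \sum_(u <- ts) cost w u.
Proof.
move=> st; have [_ _ _ sts] := is_stE st.
rewrite /cost costdE (wsum_st st).
rewrite (eq_big_In (fun u Hu => costdS 1 (sts u Hu))) big_split /= mulr1; ring.
Qed.

Lemma costd_ge0 S t d : is_st e S t -> 0 <= costd w d t.
Proof.
move=> st; elim: st d => {t} {}S r ts _ _ _ _ IH d.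
rewrite costdE addr_ge0 ?mulr_ge0 //.
by have := ler_big_In (f := fun _ => 0) (fun u Hu => IH u Hu d.+1); rewrite big1_eq.
Qed.

Lemma costd_le S t d : is_st e S t -> costd w d t <= (d + #|S|)%:R * wsum w S.
Proof.
move=> st; elim: st d => {t} {}S r ts rS un eqs sts IH d.
have st := ST rS un eqs sts.
rewrite costdE (wsum_st st) mulrDr (mulrC (w r)); apply: lerD.
  by rewrite ler_wpM2r // ler_nat leq_addr.
rewrite big_distrr /=; apply: ler_big_In => u Hu; apply: le_trans (IH u Hu d.+1) _.
rewrite ler_wpM2r ?wsum_ge0 // ler_nat addSnnS leq_add2l (cardsD1 r S) rS ltnS.
exact/subset_leq_card/(comps_sub esym)/(comps_child st Hu).
Qed.

Lemma cost_le_cent S t : centroid_tree e w S t -> cost w t <= cent e w S.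
Proof.
move=> ct; apply: sup_upper_bound; last by exists t.
split; first by exists (cost w t), t.
by exists ((1 + #|S|)%:R * wsum w S) => _ [t' [[st' _] ->]]; apply: costd_le st'.
Qed.

(* Without any centroid tree, [cent] is the junk value [sup set0 = 0]. *)
Lemma cent_ge0 S : 0 <= cent e w S.
Proof.
have [[t ct]|noct] := Classical_Prop.classic (exists t, centroid_tree e w S t).
  by apply: le_trans (cost_le_cent ct); apply: costd_ge0 ct.1.
by rewrite /cent sup_out // => -[[_ [t [ct _]]] _]; apply: noct; exists t.
Qed.

Lemma centroid_tree_child S r ts u : centroid_tree e w S (Node r ts) -> List.In u ts ->
  centroid_tree e w (vset u) u.
Proof.
case=> /is_stE [_ _ _ sts] cen Hu; split; first exact: sts.
by move=> a Ha; apply: cen; apply/subtreesE; right; exists u.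
Qed.

Lemma wsum_centroid_child S r ts u : centroid_tree e w S (Node r ts) -> List.In u ts ->
  wsum w (vset u) <= wsum w S / 2.
Proof.
case=> st cen Hu; have [_] := cen _ (subtrees_self _).
by rewrite (vset_st st); apply; apply: comps_child st Hu.
Qed.

Lemma cost_centroid_node S r ts : centroid_tree e w S (Node r ts) ->
  cost w (Node r ts) <= wsum w S + \sum_(H in comps e (S :\ r)) cent e w H.
Proof.
move=> ct; rewrite (cost_node ct.1) lerD2l (big_comps_children _ _ ct.1).
by apply: ler_big_In => u Hu; apply/cost_le_cent/(centroid_tree_child ct).
Qed.

Lemma cost_centroid_node_child S r ts c : centroid_tree e w S (Node r ts) -> List.In c ts ->
  cost w (Node r ts) <=
    wsum w S + cost w c + \sum_(H in comps e (S :\ r) :\ vset c) cent e w H.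
Proof.
move=> ct Hc; have [l1 [l2 E]] := List.in_split c ts Hc.
have le_cent l : (forall u, List.In u l -> List.In u ts) ->
    \sum_(u <- l) cost w u <= \sum_(u <- l) cent e w (vset u).
  by move=> lts; apply: ler_big_In => u /lts Hu; apply/cost_le_cent/(centroid_tree_child ct).
have := le_cent l1 (fun u Hu => ltac:(by rewrite E; apply: List.in_or_app; left)).
have := le_cent l2 (fun u Hu => ltac:(by rewrite E; apply: List.in_or_app; right; right)).
have := @big_setD1 R 0 +%R _ (vset c) _ (cent e w) (comps_child ct.1 Hc).
have := big_comps_children +%R (cent e w) ct.1.
rewrite (cost_node ct.1) E !big_cat !big_cons /=; lra.
Qed.

End SearchTrees.

Lemma inv_exp2_le1 (R : realFieldType) p : 1 / 2 ^+ p <= 1 :> R.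
Proof. by rewrite div1r invf_le1 ?exprn_gt0 // exprn_ege1 // ler1n. Qed.

Lemma inv_exp2S (R : realFieldType) p (s : R) :
  (2 - 1 / 2 ^+ p.+1) * s = s + (2 - 1 / 2 ^+ p) * (s / 2).
Proof. by rewrite exprS; field; rewrite expf_neq0 // pnatr_eq0. Qed.

Lemma cost_centroid_tree_root_path (V : finType) (e : rel V) (R : realType) (w : V -> R)
    p S t (v : nat -> V) :
  symmetric e -> (forall x, 0 <= w x) ->
  centroid_tree e w S t -> v 0%N = st_root t ->
  (forall i, (1 <= i <= p)%N -> is_child t (v i.-1) (v i)) ->
  cost w t <= (2 - 1 / 2 ^+ p) * wsum w S
    + \sum_(H in comps e (S :\: [set v (nat_of_ord i) | i : 'I_p.+1])) cent e w H.
Proof.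
move=> esym w0; elim: p S t v => [|p IHp] S [r ts] v ct /= v0 ch.
  have -> : [set v (nat_of_ord i) | i : 'I_1] = [set r].
    apply/setP=> x; rewrite inE; apply/imsetP/eqP => [[i _ ->]|->].
      by rewrite (ord1 i) -v0.
    by exists ord0; rewrite -?v0.
  by rewrite expr0 divr1; have := cost_centroid_node esym w0 ct; lra.
have [c Hc [rc vc chc]] := root_path_child esym ct.1 v0 ch.
have chc' i : (1 <= i <= p)%N -> is_child c (v i.-1.+1) (v i.+1).
  by case: i => // i /andP [_ ip]; apply: chc.
have := IHp _ c (fun j => v j.+1) (centroid_tree_child ct Hc) rc chc'.
set P' := [set v i.+1 | i : 'I_p.+1] => IH.
have P'c : P' \subset vset c by apply/subsetP=> x /imsetP [i _ ->]; apply: vc; rewrite -ltnS.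
rewrite imset_ord_recl v0 -setDDl inv_exp2S.
have := sum_comps_setD esym (cent_ge0 esym w0) (comps_child ct.1 Hc) P'c.
have q2 : 0 <= 2 - 1 / 2 ^+ p :> R by have := inv_exp2_le1 R p; lra.
have := ler_wpM2l q2 (wsum_centroid_child esym ct Hc).
have := cost_centroid_node_child esym w0 ct Hc; lra.
Qed.

Theorem lemma5 (R : realType) (V : finType) (e : rel V) (w : V -> R)
  (C : stree V) (p : nat) (v : nat -> V) :
  is_tree e ->
  (forall x, 0 <= w x) ->
  centroid_tree e w [set: V] C ->
  cost w C = cent e w [set: V] ->
  v 0%N = st_root C ->
  (forall i, (1 <= i <= p)%N -> is_child C (v i.-1) (v i)) ->
  let P := [set v (nat_of_ord i) | i : 'I_p.+1] in
  cent e w [set: V] <=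
    (2 - 1 / 2 ^+ p) * wsum w [set: V]
    + \sum_(H in comps e (~: P)) cent e w H.
Proof.
move=> [esym _ _ _] w0 ct <- v0 ch /=; rewrite -setTD.
exact: cost_centroid_tree_root_path esym w0 ct v0 ch.
Qed.
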